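(* In the MAD-HTLC game $G(1,\mathrm{red})$ described in the context, $\mathcal{A}$ cannot increase her utility by deviating from the prescribed strategy.
   Context: Blockchain model: $n$ miners; miner $i$ has mining power $\lambda_i>0$, $\sum_i\lambda_i=1$. In each round exactly one miner is chosen, miner $i$ with probability $\lambda_i$, and creates a block containing one transaction of her choice, receiving its fee. An unrelated transaction offering the base fee $f$ is always available. Publishing a transaction reveals its contents (in particular preimages) to everyone. A contract can be redeemed by at most one confirmed transaction. All parties ($\mathcal{A}$, $\mathcal{B}$, miners) are rational and non-myopic with perfect information, with utility the expected tokens owned at the end of the game; miners play best responses. MAD-HTLC: preimages $pre_a,pre_b$ with digests $dig_a=H(pre_a)$, $dig_b=H(pre_b)$, chosen by $\mathcal{B}$; only $\mathcal{B}$ knows $pre_b$; $\mathcal{A}$ knows $pre_a$ only if $\mathcal{B}$ shared it with her. Contracts initiated in block $b_j$ with timeout $T$: MH-Dep ($v^{\mathrm{dep}}$ tokens), redeemable via dep-A (signature of $\mathcal{A}$ and $pre_a$; any block), dep-B (signature of $\mathcal{B}$ and $pre_b$; only at least $T$ blocks after initiation), dep-M (both $pre_a,pre_b$; any block); MH-Col ($v^{\mathrm{col}}$ tokens), redeemable only at least $T$ blocks after initiation via col-B (signature of $\mathcal{B}$) or col-M (both $pre_a,pre_b$). Game: $T$ rounds creating $b_{j+1},\dots,b_{j+T}$; in each round $\mathcal{A},\mathcal{B}$ alternately publish transactions (choosing which, when, and with what fee), then a random miner creates the block. Transactions: $tx^{\mathrm{dep}}_{\mathcal{A}}$ (MH-Dep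 via dep-A, fee $f<f^{\mathrm{dep}}_{\mathcal{A}}<v^{\mathrm{dep}}$); $tx^{\mathrm{dep}}_{\mathcal{B}}$ (MH-Dep via dep-B, fee $f<f^{\mathrm{dep}}_{\mathcal{B}}<v^{\mathrm{dep}}$); $tx^{\mathrm{col}}_{\mathcal{B}}$ (MH-Col via col-B, fee $f<f^{\mathrm{col}}_{\mathcal{B}}<v^{\mathrm{col}}$); $tx^{\mathrm{dc}}_{\mathcal{B}}$ (both, fee $f<f^{\mathrm{dc}}_{\mathcal{B}}<v^{\mathrm{dep}}+v^{\mathrm{col}}$). A miner may include an unrelated transaction (fee $f$), any currently valid published transaction, or, if both preimages were revealed by published transactions, her own transaction redeeming MH-Dep via dep-M (reward $v^{\mathrm{dep}}$, while unredeemed), MH-Col via col-M (reward $v^{\mathrm{col}}$, last round), or both (last round). $G(k,s)$ denotes the subgame just before round $k\in[1,T]$ with MH-Dep redeemable ($s=\mathrm{red}$) or already redeemed; the full game is $G(1,\mathrm{red})$. Prescribed strategies: if $\mathcal{A}$ knows $pre_a$ she publishes $tx^{\mathrm{dep}}_{\mathcal{A}}$ within the first $T-1$ rounds; otherwise she publishes nothing. $\mathcal{B}$ waits until block $b_{j+T-1}$ is created; if $\mathcal{A}$ has not published $tx^{\mathrm{dep}}_{\mathcal{A}}$ he publishes $tx^{\mathrm{dc}}_{\mathcal{B}}$, otherwise he publishes $tx^{\mathrm{col}}_{\mathcal{B}}$. *)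

From HB Require Import structures.
From mathcomp Require Import all_boot all_order all_algebra.
Set Implicit Arguments. Unset Strict Implicit. Unset Printing Implicit Defensive.
Import Order.TTheory GRing.Theory Num.Theory.
Local Open Scope ring_scope.

Inductive btx := BDep | BCol | BDc.

(* Possible contents of a block created by the selected miner:
   unrelated transaction (fee f), one of the published transactions
   tx^dep_A, tx^dep_B, tx^col_B, tx^dc_B, or the miner's own
   dep-M / col-M / dep-M+col-M redemption. *)
Inductive mact :=
  MUnrel | MTxA | MTxDepB | MTxCol | MTxDc | MDepM | MColM | MBothM.

Record event (n : nat) := Event {
  ev_pubA : bool;
  ev_pubB : option btx;
  ev_miner : 'I_n;
  ev_act : mact }.

Record state := State {
  pubA : bool; pubBdep : bool; pubBcol : bool; pubBdc : bool;
  depRed : bool; colRed : bool }.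

Definition init_state := State false false false false false false.

Definition publishA (b : bool) (s : state) : state :=
  State (pubA s || b) (pubBdep s) (pubBcol s) (pubBdc s) (depRed s) (colRed s).

Definition publishB (o : option btx) (s : state) : state :=
  match o with
  | None => s
  | Some BDep => State (pubA s) true (pubBcol s) (pubBdc s) (depRed s) (colRed s)
  | Some BCol => State (pubA s) (pubBdep s) true (pubBdc s) (depRed s) (colRed s)
  | Some BDc => State (pubA s) (pubBdep s) (pubBcol s) true (depRed s) (colRed s)
  end.

Definition redeems_dep (a : mact) : bool :=
  match a with MTxA | MTxDepB | MTxDc | MDepM | MBothM => true | _ => false end.
Definition redeems_col (a : mact) : bool :=
  match a with MTxCol | MTxDc | MColM | MBothM => true | _ => false end.

Definition confirm (a : mact) (s : state) : state :=
  State (pubA s) (pubBdep s) (pubBcol s) (pubBdc s)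
        (depRed s || redeems_dep a) (colRed s || redeems_col a).

Definition step_state (n : nat) (s : state) (e : event n) : state :=
  confirm (ev_act e) (publishB (ev_pubB e) (publishA (ev_pubA e) s)).

Definition state_of (n : nat) (h : seq (event n)) : state :=
  foldl (@step_state n) init_state h.

(* Parameters of the game.  knowsA: whether A knows pre_a. *)
Record params (R : realFieldType) (n : nat) := Params {
  lam : 'I_n -> R;      (* mining powers *)
  fee : R;
  vdep : R; vcol : R;
  fAdep : R; fBdep : R; fBcol : R; fBdc : R;
  T : nat;              (* timeout = number of rounds *)
  knowsA : bool }.

Definition valid_params (R : realFieldType) (n : nat) (P : params R n) : Prop :=
  (forall i, 0 < lam P i) /\
  (\sum_(i < n) lam P i = 1) /\
  (fee P < fAdep P /\ fAdep P < vdep P) /\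
  (fee P < fBdep P /\ fBdep P < vdep P) /\
  (fee P < fBcol P /\ fBcol P < vcol P) /\
  (fee P < fBdc P /\ fBdc P < vdep P + vcol P).

Section Game.
Variables (R : realFieldType) (n : nat) (P : params R n).

(* Is miner action a valid in round k with (post-publication) state s?
   Round T creates block b_{j+T}, the only block in which dep-B, col-B and
   col-M are valid. *)
Definition valid_mact (k : nat) (s : state) (a : mact) : bool :=
  let last := k == T P in
  let both := pubA s && (pubBdep s || pubBdc s) in
  match a with
  | MUnrel => true
  | MTxA => pubA s && ~~ depRed s
  | MTxDepB => [&& pubBdep s, ~~ depRed s & last]
  | MTxCol => [&& pubBcol s, ~~ colRed s & last]
  | MTxDc => [&& pubBdc s, ~~ depRed s, ~~ colRed s & last]
  | MDepM => both && ~~ depRed s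
  | MColM => [&& both, ~~ colRed s & last]
  | MBothM => [&& both, ~~ depRed s, ~~ colRed s & last]
  end.

Definition mreward (a : mact) : R :=
  match a with
  | MUnrel => fee P | MTxA => fAdep P | MTxDepB => fBdep P
  | MTxCol => fBcol P | MTxDc => fBdc P | MDepM => vdep P
  | MColM => vcol P | MBothM => vdep P + vcol P
  end.

(* A decides at the start of each round whether to publish tx^dep_A;
   the selected miner i decides the block content, also seeing A's move of
   the current round (B's move is determined by these). *)
Definition astrat := seq (event n) -> bool.
Definition mstrat := seq (event n) -> bool -> 'I_n -> mact.

Definition presA (r : nat) : astrat := fun h => (size h).+1 == r.

(* Prescribed strategy of B: in round T (after b_{j+T-1} is created)
   publish tx^col_B if tx^dep_A has been published, tx^dc_B otherwise. *)
Definition B_pub (h : seq (event n)) (s1 : state) : option btx :=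
  if (size h).+1 == T P then Some (if pubA s1 then BCol else BDc) else None.

Definition gA (a : mact) (i : 'I_n) : R :=
  if a is MTxA then vdep P - fAdep P else 0.
Definition gM (j : 'I_n) (a : mact) (i : 'I_n) : R :=
  if i == j then mreward a else 0.

Fixpoint cont (sA : astrat) (sg : mstrat) (g : mact -> 'I_n -> R)
    (m : nat) (h : seq (event n)) : R :=
  match m with
  | 0 => 0
  | m'.+1 =>
    let aA := knowsA P && sA h in
    let s1 := publishA aA (state_of h) in
    let b := B_pub h s1 in
    \sum_(i < n) lam P i *
       (g (sg h aA i) i + cont sA sg g m' (rcons h (Event aA b i (sg h aA i))))
  end.

Definition utilA (sA : astrat) (sg : mstrat) : R := cont sA sg gA (T P) [::].

Definition miner_SPE (sA : astrat) (sg : mstrat) : Prop :=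
  forall (h : seq (event n)), (size h < T P)%N -> forall i : 'I_n,
  let aA := knowsA P && sA h in
  let s1 := publishA aA (state_of h) in
  let b := B_pub h s1 in
  let s2 := publishB b s1 in
  let k := (size h).+1 in
  let payoff (a : mact) :=
      mreward a + cont sA sg (gM i) (T P - k) (rcons h (Event aA b i a)) in
  valid_mact k s2 (sg h aA i) /\
  (forall a, valid_mact k s2 a -> payoff a <= payoff (sg h aA i)).

End Game.

(* A is paid at most once, v^dep - f^dep_A when tx^dep_A is confirmed, so no
   strategy earns her more, and she earns nothing if she does not know pre_a.
   If she knows pre_a and follows the prescribed strategy, B publishes nothing
   before the last round, so until then tx^dep_A is the only transaction that
   can redeem a contract, and it is published by round T-1.  There a
   best-responding miner of power l includes it: waiting yields
   f + l * max(f^dep_A, f^col_B) (the last block then offers tx^dep_A or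
   tx^col_B), including it yields f^dep_A + l * f^col_B, which is strictly
   more.  So the prescribed strategy secures v^dep - f^dep_A. *)

From HB Require Import structures.
From mathcomp Require Import all_boot all_order all_algebra.
From mathcomp Require Import lra zify.
Import Order.TTheory GRing.Theory Num.Theory.
Local Open Scope ring_scope.

Set Implicit Arguments. Unset Strict Implicit.

Lemma convex_sum_le (R : realFieldType) (I : finType) (w F : I -> R) c :
  (forall i, 0 <= w i) -> \sum_i w i = 1 -> (forall i, F i <= c) ->
  \sum_i w i * F i <= c.
Proof.
move=> w_ge0 w_sum1 F_le; rewrite -[leRHS]mul1r -w_sum1 mulr_suml.
by apply: ler_sum => i _; apply: ler_wpM2l.
Qed.

Lemma convex_sum_ge (R : realFieldType) (I : finType) (w F : I -> R) c :
  (forall i, 0 <= w i) -> \sum_i w i = 1 -> (forall i, c <= F i) ->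
  c <= \sum_i w i * F i.
Proof.
move=> w_ge0 w_sum1 F_ge; rewrite -[leLHS]mul1r -w_sum1 mulr_suml.
by apply: ler_sum => i _; apply: ler_wpM2l.
Qed.

Lemma state_of_rcons (n : nat) (h : seq (event n)) e :
  state_of (rcons h e) = step_state (state_of h) e.
Proof. by rewrite /state_of foldl_rcons. Qed.

Lemma lt_add_mul_max (R : realFieldType) (f a b l : R) :
  f < a -> f < b -> 0 < l <= 1 -> f + l * Num.max a b < a + l * b.
Proof.
move=> fa fb /andP[l_gt0 l_le1].
have : 0 <= (1 - l) * (a - f) by apply: mulr_ge0; rewrite subr_ge0 // ltW.
have : 0 < l * (b - f) by apply: mulr_gt0; rewrite // subr_gt0.
by rewrite maxEle; case: (leP a b); nra.
Qed.

Section MadHtlcUtility.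
Variables (R : realFieldType) (n : nat) (P : params R n).

Lemma contS sA sg g m h :
  cont P sA sg g m.+1 h =
  \sum_(i < n) lam P i *
    (g (sg h (knowsA P && sA h) i) i +
     cont P sA sg g m (rcons h (Event (knowsA P && sA h)
        (B_pub P h (publishA (knowsA P && sA h) (state_of h))) i
        (sg h (knowsA P && sA h) i)))).
Proof. by []. Qed.

Lemma cont1_gM sA sg h i :
  cont P sA sg (gM P i) 1 h = lam P i * mreward P (sg h (knowsA P && sA h) i).
Proof.
rewrite contS (bigD1 i) //= big1 ?addr0 /gM ?eqxx // => j /negbTE ->.
by rewrite addr0 mulr0.
Qed.

Lemma valid_MTxA k b o s :
  valid_mact P k (publishB o (publishA b s)) MTxA =
    (pubA s || b) && ~~ depRed s.
Proof. by case: o => [[]|]. Qed.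

Lemma valid_mact_early k s a :
  valid_mact P k s a -> k != T P -> ~~ pubBdep s -> ~~ pubBdc s ->
  a = MUnrel \/ a = MTxA.
Proof.
move=> + /negbTE last_k /negbTE nBdep /negbTE nBdc.
by case: a; rewrite /valid_mact /= ?last_k ?nBdep ?nBdc ?andbF //; auto.
Qed.

Definition A_excluded (s : state) : bool :=
  depRed s || ~~ knowsA P && ~~ pubA s.

Lemma A_excluded_step s x o (i : 'I_n) a :
  A_excluded s -> A_excluded (step_state s (Event (knowsA P && x) o i a)).
Proof.
rewrite /A_excluded => /orP[dep_s | /andP[/negbTE nK /negbTE nA]];
  by case: o => [[]|]; rewrite /= ?dep_s ?nK ?nA /= ?orbT.
Qed.

Lemma cont_gA_excluded sA sg m h :
  miner_SPE P sA sg -> (size h + m = T P)%N -> A_excluded (state_of h) ->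
  cont P sA sg (gA P) m h = 0.
Proof.
move=> spe; elim: m h => [|m IH] h size_h excl //.
rewrite contS big1 // => i _.
have lt_h : (size h < T P)%N by lia.
have [] := spe h lt_h i; move: (sg h _ i) => a valid_a _.
have -> : gA P a i = 0.
  case: a valid_a => //; rewrite valid_MTxA.
  by case/orP: excl => [-> | /andP[/negbTE-> /negbTE->]]; rewrite ?andbF.
rewrite IH ?state_of_rcons ?A_excluded_step ?size_rcons ?addSnnS //.
by rewrite addr0 mulr0.
Qed.

Hypothesis HP : valid_params P.

Lemma lam_gt0 i : 0 < lam P i.
Proof. by case: HP. Qed.

Lemma lam_ge0 i : 0 <= lam P i.
Proof. exact/ltW/lam_gt0. Qed.

Lemma lam_sum1 : \sum_(i < n) lam P i = 1.
Proof. by case: HP => _ []. Qed.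

Lemma lam_le1 i : lam P i <= 1.
Proof.
rewrite -lam_sum1 (bigD1 i) //= lerDl.
by apply: sumr_ge0 => j _; apply: lam_ge0.
Qed.

Lemma fee_lt_fAdep : fee P < fAdep P.
Proof. by case: HP => _ [_ [[]]]. Qed.

Lemma fAdep_lt_vdep : fAdep P < vdep P.
Proof. by case: HP => _ [_ [[]]]. Qed.

Lemma fee_lt_fBcol : fee P < fBcol P.
Proof. by case: HP => _ [_ [_ [_ [[]]]]]. Qed.

Lemma gA_ge0 a i : 0 <= gA P a i.
Proof. by case: a; rewrite //= subr_ge0 ltW // fAdep_lt_vdep. Qed.

Lemma cont_gA_ge0 sA sg m h : 0 <= cont P sA sg (gA P) m h.
Proof.
elim: m h => // m IH h; apply: sumr_ge0 => i _.
by rewrite mulr_ge0 ?lam_ge0 ?addr_ge0 ?gA_ge0.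
Qed.

Lemma cont_gA_le sA sg m h :
  miner_SPE P sA sg -> (size h + m = T P)%N ->
  cont P sA sg (gA P) m h <= vdep P - fAdep P.
Proof.
move=> spe; elim: m h => [|m IH] h size_h.
  by rewrite /= subr_ge0 ltW // fAdep_lt_vdep.
rewrite contS; apply: convex_sum_le lam_ge0 lam_sum1 _ => i.
have size_h' e : (size (rcons h e) + m = T P)%N by rewrite size_rcons addSnnS.
case: (sg h _ i) => /=; rewrite ?add0r ?IH //.
rewrite cont_gA_excluded ?addr0 ?state_of_rcons //.
by rewrite /A_excluded /= orbT.
Qed.

Lemma SPE_last_round_reward sA sg h i :
  miner_SPE P sA sg -> (size h).+1 = T P ->
  pubA (state_of h) -> ~~ colRed (state_of h) ->
  ~~ pubBdep (state_of h) -> ~~ pubBdc (state_of h) ->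
  mreward P (sg h (knowsA P && sA h) i) =
    if depRed (state_of h) then fBcol P else Num.max (fAdep P) (fBcol P).
Proof.
move=> spe last_h A_h /negbTE nC /negbTE nBdep /negbTE nBdc.
have lt_h : (size h < T P)%N by rewrite -last_h.
have [] := spe h lt_h i.
rewrite /B_pub last_h eqxx subnn /valid_mact /= A_h nC nBdep nBdc eqxx /=.
move: (sg h _ i) => a valid_a opt_a.
have fee_fAdep := fee_lt_fAdep; have fee_fBcol := fee_lt_fBcol.
have fBcol_le := opt_a MTxCol isT; rewrite !addr0 in fBcol_le.
case: (depRed (state_of h)) in valid_a opt_a *.
  by case: a valid_a fBcol_le {opt_a} => //= _; lra.
have fAdep_le := opt_a MTxA isT; rewrite !addr0 in fAdep_le.
apply/eqP; rewrite eq_le ge_max fAdep_le fBcol_le le_max andbT.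
by case: a valid_a fBcol_le fAdep_le {opt_a} => //= _;
  rewrite ?lexx ?orbT //; lra.
Qed.

Definition pending (s : state) : bool :=
  ~~ [|| depRed s, colRed s, pubBdep s | pubBdc s].

Lemma SPE_includes_txA_penultimate sA sg h i :
  miner_SPE P sA sg -> (size h).+2 = T P ->
  pubA (state_of h) || knowsA P && sA h -> pending (state_of h) ->
  sg h (knowsA P && sA h) i = MTxA.
Proof.
move=> spe size_h A_h /norP[nD /norP[nC /norP[nBdep nBdc]]].
have lt_h : (size h < T P)%N by lia.
have not_last : ((size h).+1 == T P) = false by apply/eqP; lia.
have [] := spe h lt_h i; rewrite /B_pub not_last.
have -> : (T P - (size h).+1 = 1)%N by lia.
move: (sg h _ i) => a valid_a opt_a.
have [a_unrel|//] := valid_mact_early valid_a (negbT not_last) nBdep nBdc.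
have := opt_a MTxA; rewrite valid_MTxA A_h nD a_unrel => /(_ isT).
rewrite !cont1_gM !(SPE_last_round_reward _ spe) ?size_rcons ?state_of_rcons;
  rewrite //= ?orbT ?orbF ?(negbTE nD) //.
by rewrite leNgt lt_add_mul_max ?fee_lt_fAdep ?fee_lt_fBcol ?lam_gt0 ?lam_le1.
Qed.

Lemma cont_presA_ge r sg d h :
  knowsA P -> (r < T P)%N -> miner_SPE P (presA r) sg ->
  (size h + d.+2 = T P)%N -> pubA (state_of h) = (r <= size h)%N ->
  pending (state_of h) ->
  vdep P - fAdep P <= cont P (presA r) sg (gA P) d.+2 h.
Proof.
move=> knows r_lt spe; elim: d h => [|d IH] h size_h A_h pend;
  rewrite contS; apply: convex_sum_ge lam_ge0 lam_sum1 _ => i.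
  rewrite (SPE_includes_txA_penultimate _ spe) //.
  - by rewrite [gA _ _ _]/= lerDl cont_gA_ge0.
  - lia.
  - by rewrite A_h knows /presA; apply/orP; lia.
have lt_h : (size h < T P)%N by lia.
have not_last : ((size h).+1 == T P) = false by apply/eqP; lia.
have [valid_a _] := spe h lt_h i; move: valid_a; rewrite /B_pub not_last.
have /norP[_ /norP[_ /norP[nBdep nBdc]]] := pend.
move/valid_mact_early => /(_ (negbT not_last) nBdep nBdc) [->|->].
- rewrite [gA _ _ _]/= add0r IH ?size_rcons ?state_of_rcons //=.
  + lia.
  + by rewrite A_h knows /presA [in RHS]leq_eqVlt ltnS orbC eq_sym.
  + by rewrite /pending /= !orbF.
- by rewrite [gA _ _ _]/= lerDl cont_gA_ge0.
Qed.

End MadHtlcUtility.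

Theorem lemma5 (R : realFieldType) (n : nat) (P : params R n) (r : nat)
  (sA : astrat n) (sigma sigma' : mstrat n) :
  valid_params P ->
  (0 < r < T P)%N ->
  miner_SPE P (@presA n r) sigma ->
  miner_SPE P sA sigma' ->
  utilA P sA sigma' <= utilA P (@presA n r) sigma.
Proof.
move=> HP /andP[r_gt0 r_lt] spe spe'; rewrite /utilA.
case knows: (knowsA P).
- apply: le_trans (cont_gA_le HP spe' _) _ => //.
  have T_eq : (T P - 2).+2 = T P by lia.
  rewrite -T_eq; apply: cont_presA_ge => //=.
  by rewrite leqNgt r_gt0.
- by rewrite cont_gA_excluded ?cont_gA_ge0 // /A_excluded knows.
Qed.
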